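(* Let $X\in\mathbb{R}^{d\times d}$ with $X+X^\top$ positive definite, $\gamma\in(0,1)$, $\gamma_k=(k+1)^{-\gamma}$ for $k\ge0$. Let $q=\lambda_{\min}(X+X^\top)/4$, $\mu=-\lambda_{\min}(X+X^\top)+\lambda_{\max}(X^\top X)$, $K=\big\lceil\big(\lambda_{\max}(X^\top X)/(\lambda_{\min}(X+X^\top)-2q)\big)^{1/\gamma}\big\rceil$, and $$C=\max\Big\{1,\ \sqrt{\max_{0\le\ell_1\le\ell_2\le K}\prod_{\ell=\ell_1}^{\ell_2}e^{\gamma_\ell(\mu+2q)}}\Big\}.$$ Then for all integers $0\le i\le n$, $$\prod_{k=i}^{n}\|I-\gamma_kX\|\le C\,e^{-q\sum_{k=i}^n\gamma_k}.$$
   Context: $\|\cdot\|$ is the spectral norm; $\lambda_{\min},\lambda_{\max}$ denote smallest and largest eigenvalues. *)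

From Stdlib Require Import Reals Lra Lia ZArith ClassicalEpsilon.
Open Scope R_scope.

Fixpoint rsum (m : nat) (f : nat -> R) : R :=
  match m with O => 0 | S m' => rsum m' f + f m' end.
Fixpoint rprod (m : nat) (f : nat -> R) : R :=
  match m with O => 1 | S m' => rprod m' f * f m' end.
(* sum / product over k = i, ..., n (empty if n < i) *)
Definition rsum_range (i n : nat) (f : nat -> R) : R :=
  rsum (S n - i) (fun j => f (i + j)%nat).
Definition rprod_range (i n : nat) (f : nat -> R) : R :=
  rprod (S n - i) (fun j => f (i + j)%nat).
Fixpoint rmax_upto (m : nat) (f : nat -> R) : R :=
  match m with O => f O | S m' => Rmax (rmax_upto m' f) (f m) end.

(* d x d real matrices as functions of indices (only indices < d matter),
   vectors in R^d as functions nat -> R. *)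
Definition mat := nat -> nat -> R.
Definition vec := nat -> R.
Definition mtr (A : mat) : mat := fun i j => A j i.
Definition madd (A B : mat) : mat := fun i j => A i j + B i j.
Definition mscale (c : R) (A : mat) : mat := fun i j => c * A i j.
Definition mid : mat := fun i j => if Nat.eqb i j then 1 else 0.
Definition mmul (d : nat) (A B : mat) : mat :=
  fun i j => rsum d (fun k => A i k * B k j).
Definition mvec (d : nat) (A : mat) (v : vec) : vec :=
  fun i => rsum d (fun j => A i j * v j).
Definition vnorm (d : nat) (v : vec) : R := sqrt (rsum d (fun i => v i ^ 2)).
Definition nonzero (d : nat) (v : vec) : Prop := exists i, (i < d)%nat /\ v i <> 0.

Definition pos_def (d : nat) (M : mat) : Prop :=
  forall v, nonzero d v -> 0 < rsum d (fun i => v i * mvec d M v i).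

Definition is_eigenvalue (d : nat) (M : mat) (l : R) : Prop :=
  exists v, nonzero d v /\ forall i, (i < d)%nat -> mvec d M v i = l * v i.

(* smallest / largest eigenvalue (of a symmetric matrix, whose eigenvalues are real) *)
Definition lambda_min (d : nat) (M : mat) : R :=
  epsilon (inhabits 0) (fun l => is_eigenvalue d M l /\
                                 forall m, is_eigenvalue d M m -> l <= m).
Definition lambda_max (d : nat) (M : mat) : R :=
  epsilon (inhabits 0) (fun l => is_eigenvalue d M l /\
                                 forall m, is_eigenvalue d M m -> m <= l).

Definition spec_norm (d : nat) (A : mat) : R :=
  epsilon (inhabits 0)
    (is_lub (fun r => exists v, vnorm d v = 1 /\ r = vnorm d (mvec d A v))).

(* ceiling of a real, as a natural number (used for positive arguments) *)
Definition natceil (x : R) : nat := Z.to_nat (- Int_part (- x)).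

Definition gam (g : R) (k : nat) : R := Rpower (INR k + 1) (- g).

(* For a unit vector v, |(I - c X) v|^2 = 1 - c v^T (X + X^T) v + c^2 |X v|^2, and the
   Rayleigh bounds lambda_min(X + X^T) <= v^T (X + X^T) v and |X v|^2 <= lambda_max(X^T X)
   (a minimiser of a quadratic form on the compact unit sphere is an eigenvector) give
   ||I - c X||^2 <= 1 - c lambda_min + c^2 lambda_max <= exp (-c lambda_min + c^2 lambda_max).
   Once k >= K the step gam_k is so small that gam_k lambda_max <= lambda_min - 2q, and the
   k-th factor is at most exp (-q gam_k); for k <= K it is at most exp (-q gam_k) times
   exp (gam_k (mu + 2q))^(1/2), and the product of these excess factors over any window of
   [0, K] is at most C. *)

From Stdlib Require Import Reals Lra Lia ZArith ClassicalEpsilon.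
From mathcomp Require all_boot all_algebra all_classical all_reals all_analysis.
From mathcomp Require Rstruct Rstruct_topology.
Open Scope R_scope.

Lemma rsum_ext m F G : (forall k, (k < m)%nat -> F k = G k) -> rsum m F = rsum m G.
Proof.
  induction m as [|m IH]; intros H; simpl; auto.
  rewrite IH, (H m) by (try intros; try apply H; lia); reflexivity.
Qed.

Lemma rsum_add m F G : rsum m (fun k => F k + G k) = rsum m F + rsum m G.
Proof. induction m as [|m IH]; simpl; [lra | rewrite IH; ring]. Qed.

Lemma rsum_scal m c F : rsum m (fun k => c * F k) = c * rsum m F.
Proof. induction m as [|m IH]; simpl; [ring | rewrite IH; ring]. Qed.

Lemma rsum_eq0 m F : (forall k, (k < m)%nat -> F k = 0) -> rsum m F = 0.
Proof.
  induction m as [|m IH]; intros H; simpl; [reflexivity|].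
  rewrite IH, H by (try intros; try apply H; lia). ring.
Qed.

Lemma rsum_le m F G : (forall k, (k < m)%nat -> F k <= G k) -> rsum m F <= rsum m G.
Proof.
  induction m as [|m IH]; intros H; simpl; [lra|].
  pose proof (IH ltac:(intros; apply H; lia)). pose proof (H m ltac:(lia)). lra.
Qed.

Lemma rsum_nonneg m F : (forall k, (k < m)%nat -> 0 <= F k) -> 0 <= rsum m F.
Proof. intros H. rewrite <- (rsum_eq0 m (fun _ => 0)) by auto. now apply rsum_le. Qed.

Lemma rsum_neq0 m F : rsum m F <> 0 -> exists k, (k < m)%nat /\ F k <> 0.
Proof.
  induction m as [|m IH]; simpl; intros H; [lra|].
  destruct (Req_dec (F m) 0) as [E|E].
  - destruct IH as [k [Hk Hf]]; [lra|]. exists k. split; [lia | exact Hf].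
  - exists m. split; [lia | exact E].
Qed.

Lemma rsum_ge_term m F k :
  (forall j, (j < m)%nat -> 0 <= F j) -> (k < m)%nat -> F k <= rsum m F.
Proof.
  induction m as [|m IH]; intros H Hk; simpl; [lia|].
  destruct (Nat.eq_dec k m) as [->|].
  - pose proof (rsum_nonneg m F ltac:(intros; apply H; lia)). lra.
  - pose proof (IH ltac:(intros; apply H; lia) ltac:(lia)). pose proof (H m ltac:(lia)). lra.
Qed.

Lemma rsum_swap m p F :
  rsum m (fun i => rsum p (fun j => F i j)) = rsum p (fun j => rsum m (fun i => F i j)).
Proof.
  induction m as [|m IH]; simpl.
  - symmetry. now apply rsum_eq0.
  - rewrite IH, <- rsum_add. reflexivity.
Qed.

Lemma rsum_delta m i v :
  (i < m)%nat -> rsum m (fun j => (if Nat.eqb i j then 1 else 0) * v j) = v i.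
Proof.
  induction m as [|m IH]; intros H; simpl; [lia|].
  destruct (Nat.eq_dec i m) as [->|].
  - rewrite Nat.eqb_refl, rsum_eq0; [ring|].
    intros k Hk. destruct (Nat.eqb_spec m k); [lia | ring].
  - rewrite IH by lia. destruct (Nat.eqb_spec i m); [lia | ring].
Qed.

Lemma rprod_nonneg m F : (forall k, (k < m)%nat -> 0 <= F k) -> 0 <= rprod m F.
Proof.
  induction m as [|m IH]; intros H; simpl; [lra|].
  apply Rmult_le_pos; [apply IH; intros|]; apply H; lia.
Qed.

Lemma rprod_le m F G : (forall k, (k < m)%nat -> 0 <= F k <= G k) -> rprod m F <= rprod m G.
Proof.
  induction m as [|m IH]; intros H; simpl; [lra|].
  apply Rmult_le_compat; try apply rprod_nonneg; try apply IH; intros; apply H; lia.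
Qed.

Lemma rprod_mul m F G : rprod m (fun k => F k * G k) = rprod m F * rprod m G.
Proof. induction m as [|m IH]; simpl; [ring | rewrite IH; ring]. Qed.

Lemma rprod_exp m F : rprod m (fun k => exp (F k)) = exp (rsum m F).
Proof. induction m as [|m IH]; simpl; [now rewrite exp_0 | rewrite IH, exp_plus; ring]. Qed.

Lemma rprod_range_le i n F G :
  (forall k, 0 <= F k <= G k) -> rprod_range i n F <= rprod_range i n G.
Proof. intros H. apply rprod_le. intros; apply H. Qed.

Lemma rprod_range_mul i n F G :
  rprod_range i n (fun k => F k * G k) = rprod_range i n F * rprod_range i n G.
Proof. apply rprod_mul. Qed.

Lemma rprod_range_exp i n F : rprod_range i n (fun k => exp (F k)) = exp (rsum_range i n F).
Proof. apply rprod_exp. Qed.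

Lemma rsum_range_scal i n c F : rsum_range i n (fun k => c * F k) = c * rsum_range i n F.
Proof. apply rsum_scal. Qed.

Lemma rprod_range_empty i n F : (n < i)%nat -> rprod_range i n F = 1.
Proof. intros H. unfold rprod_range. replace (S n - i)%nat with 0%nat by lia. reflexivity. Qed.

Lemma rprod_range_S i n F :
  (i <= S n)%nat -> rprod_range i (S n) F = rprod_range i n F * F (S n).
Proof.
  intros H. unfold rprod_range. replace (S (S n) - i)%nat with (S (S n - i)) by lia.
  cbn [rprod]. now replace (i + (S n - i))%nat with (S n) by lia.
Qed.

Lemma rmax_upto_ge m f k : (k <= m)%nat -> f k <= rmax_upto m f.
Proof.
  induction m as [|m IH]; intros H; simpl.
  - replace k with 0%nat by lia. lra.
  - destruct (Nat.eq_dec k (S m)) as [->|]; [apply Rmax_r|].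
    eapply Rle_trans; [apply IH; lia | apply Rmax_l].
Qed.

Lemma rprod_range_truncated_sqrt E K i n : (forall k, 0 <= E k) ->
  rprod_range i n (fun k => if Nat.leb k K then sqrt (E k) else 1) =
  sqrt (rprod_range i (Nat.min n K) E).
Proof.
  intros HE. induction n as [|n IH].
  - destruct i.
    + unfold rprod_range. replace (Nat.min 0 K) with 0%nat by lia. simpl.
      now rewrite !Rmult_1_l.
    + now rewrite !rprod_range_empty, sqrt_1 by lia.
  - destruct (Nat.le_gt_cases i (S n)) as [Hi|Hi];
      [| now rewrite !rprod_range_empty, sqrt_1 by lia].
    rewrite rprod_range_S, IH by auto.
    destruct (Nat.leb_spec (S n) K).
    + replace (Nat.min (S n) K) with (S n) by lia. replace (Nat.min n K) with n by lia.
      rewrite rprod_range_S, sqrt_mult by (auto; apply rprod_nonneg; auto). reflexivity.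
    + replace (Nat.min (S n) K) with (Nat.min n K) by lia. ring.
Qed.

Lemma rprod_range_truncated_sqrt_le E K i n : (forall k, 0 <= E k) ->
  rprod_range i n (fun k => if Nat.leb k K then sqrt (E k) else 1) <=
  Rmax 1 (sqrt (rmax_upto K (fun l2 => rmax_upto l2 (fun l1 => rprod_range l1 l2 E)))).
Proof.
  intros HE. rewrite rprod_range_truncated_sqrt by auto.
  destruct (Nat.le_gt_cases i (Nat.min n K)).
  - eapply Rle_trans; [|apply Rmax_r]. apply sqrt_le_1_alt.
    eapply Rle_trans; [|apply (rmax_upto_ge K _ (Nat.min n K)); lia].
    apply (rmax_upto_ge _ (fun l1 => rprod_range l1 (Nat.min n K) E)). lia.
  - rewrite rprod_range_empty, sqrt_1 by lia. apply Rmax_l.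
Qed.

Definition sqnorm (d : nat) (v : vec) : R := rsum d (fun i => v i ^ 2).
Definition bform (d : nat) (S : mat) (u v : vec) : R := rsum d (fun i => u i * mvec d S v i).
Definition qform (d : nat) (S : mat) (v : vec) : R := bform d S v v.
Definition symmetric (d : nat) (S : mat) : Prop :=
  forall i j, (i < d)%nat -> (j < d)%nat -> S i j = S j i.

Section Forms.
Variable d : nat.

Lemma sqnorm_nonneg v : 0 <= sqnorm d v.
Proof. apply rsum_nonneg. intros; apply pow2_ge_0. Qed.

Lemma sqnorm_eq0 v : sqnorm d v = 0 -> forall k, (k < d)%nat -> v k = 0.
Proof.
  intros H k Hk.
  pose proof (rsum_ge_term d (fun i => v i ^ 2) k ltac:(intros; apply pow2_ge_0) Hk).
  unfold sqnorm in H. pose proof (pow2_ge_0 (v k)). nra.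
Qed.

Lemma sqnorm_pos_nonzero v : 0 < sqnorm d v -> nonzero d v.
Proof.
  intros H. destruct (rsum_neq0 d (fun i => v i ^ 2)) as [k [Hk Hv]]; [unfold sqnorm in H; lra|].
  exists k. split; [exact Hk|]. intros E. apply Hv. rewrite E. ring.
Qed.

Lemma sqnorm_nonzero_pos v : nonzero d v -> 0 < sqnorm d v.
Proof.
  intros [k [Hk Hv]].
  pose proof (rsum_ge_term d (fun i => v i ^ 2) k ltac:(intros; apply pow2_ge_0) Hk).
  assert (0 < v k ^ 2) by (simpl; nra). unfold sqnorm. lra.
Qed.

Lemma sqnorm_scale c v : sqnorm d (fun k => c * v k) = c ^ 2 * sqnorm d v.
Proof. unfold sqnorm. rewrite <- rsum_scal. apply rsum_ext. intros; ring. Qed.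

Lemma sqnorm_add_scaled w r t : sqnorm d (fun k => w k + t * r k) =
  sqnorm d w + 2 * t * rsum d (fun k => w k * r k) + t ^ 2 * sqnorm d r.
Proof.
  unfold sqnorm. rewrite <- !rsum_scal, <- !rsum_add. apply rsum_ext; intros; ring.
Qed.

Lemma mvec_add S u v i : mvec d S (fun k => u k + v k) i = mvec d S u i + mvec d S v i.
Proof. unfold mvec. rewrite <- rsum_add. apply rsum_ext. intros; ring. Qed.

Lemma mvec_scale S c v i : mvec d S (fun k => c * v k) i = c * mvec d S v i.
Proof. unfold mvec. rewrite <- rsum_scal. apply rsum_ext. intros; ring. Qed.

Lemma mvec_mscale S c v i : mvec d (mscale c S) v i = c * mvec d S v i.
Proof. unfold mvec, mscale. rewrite <- rsum_scal. apply rsum_ext. intros; ring. Qed.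

Lemma mvec_madd S T v i : mvec d (madd S T) v i = mvec d S v i + mvec d T v i.
Proof. unfold mvec, madd. rewrite <- rsum_add. apply rsum_ext. intros; ring. Qed.

Lemma mvec_mid v i : (i < d)%nat -> mvec d mid v i = v i.
Proof. apply rsum_delta. Qed.

Lemma bform_addl S u1 u2 v : bform d S (fun k => u1 k + u2 k) v = bform d S u1 v + bform d S u2 v.
Proof. unfold bform. rewrite <- rsum_add. apply rsum_ext. intros; ring. Qed.

Lemma bform_scalel S c u v : bform d S (fun k => c * u k) v = c * bform d S u v.
Proof. unfold bform. rewrite <- rsum_scal. apply rsum_ext. intros; ring. Qed.

Lemma bform_addr S u v1 v2 : bform d S u (fun k => v1 k + v2 k) = bform d S u v1 + bform d S u v2.
Proof. unfold bform. rewrite <- rsum_add. apply rsum_ext. intros. rewrite mvec_add. ring. Qed.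

Lemma bform_scaler S c u v : bform d S u (fun k => c * v k) = c * bform d S u v.
Proof. unfold bform. rewrite <- rsum_scal. apply rsum_ext. intros. rewrite mvec_scale. ring. Qed.

Lemma bform_mtr S u v : bform d (mtr S) u v = bform d S v u.
Proof.
  unfold bform, mvec, mtr.
  transitivity (rsum d (fun i => rsum d (fun j => u i * S j i * v j))).
  { apply rsum_ext; intros. rewrite <- rsum_scal. apply rsum_ext; intros; ring. }
  rewrite rsum_swap. apply rsum_ext; intros. rewrite <- rsum_scal. apply rsum_ext; intros; ring.
Qed.

Lemma bform_sym S u v : symmetric d S -> bform d S u v = bform d S v u.
Proof.
  intros H. rewrite <- bform_mtr. unfold bform, mvec, mtr. apply rsum_ext; intros.
  f_equal. apply rsum_ext; intros. now rewrite H.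
Qed.

Lemma qform_scale S c v : qform d S (fun k => c * v k) = c ^ 2 * qform d S v.
Proof. unfold qform. rewrite bform_scalel, bform_scaler. ring. Qed.

Lemma qform_add_scaled S w r t : symmetric d S ->
  qform d S (fun k => w k + t * r k) = qform d S w + 2 * t * bform d S r w + t ^ 2 * qform d S r.
Proof.
  intros Hs. unfold qform.
  rewrite bform_addl, !bform_addr, !bform_scalel, !bform_scaler, (bform_sym S w r Hs). ring.
Qed.

Lemma qform_opp S v : qform d (mscale (-1) S) v = - qform d S v.
Proof.
  unfold qform, bform.
  transitivity (rsum d (fun i => -1 * (v i * mvec d S v i))).
  - apply rsum_ext. intros. rewrite mvec_mscale. ring.
  - rewrite rsum_scal. ring.
Qed.

Lemma qform_mtr_mul X v : qform d (mmul d (mtr X) X) v = sqnorm d (mvec d X v).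
Proof.
  unfold qform, bform, sqnorm, mmul, mtr, mvec.
  transitivity (rsum d (fun i => rsum d (fun k => v i * X k i * rsum d (fun j => X k j * v j)))).
  { apply rsum_ext; intros i Hi.
    transitivity (v i * rsum d (fun j => rsum d (fun k => X k i * X k j * v j))).
    { f_equal. apply rsum_ext; intros j Hj. rewrite Rmult_comm, <- rsum_scal.
      apply rsum_ext; intros; ring. }
    rewrite rsum_swap, <- rsum_scal. apply rsum_ext; intros k Hk.
    rewrite <- !rsum_scal. apply rsum_ext; intros; ring. }
  rewrite rsum_swap. apply rsum_ext; intros k Hk.
  transitivity (rsum d (fun j => X k j * v j) * rsum d (fun i => X k i * v i)).
  - rewrite <- rsum_scal. apply rsum_ext; intros; ring.
  - ring.
Qed.

Lemma qform_add_mtr X v : qform d (madd X (mtr X)) v = 2 * qform d X v.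
Proof.
  transitivity (qform d X v + qform d (mtr X) v).
  { unfold qform, bform. rewrite <- rsum_add. apply rsum_ext; intros. rewrite mvec_madd. ring. }
  unfold qform at 2. rewrite bform_mtr. unfold qform. ring.
Qed.

Lemma sqnorm_id_sub_scale X c v :
  sqnorm d (mvec d (madd mid (mscale (- c) X)) v) =
  sqnorm d v - c * qform d (madd X (mtr X)) v + c ^ 2 * qform d (mmul d (mtr X) X) v.
Proof.
  rewrite qform_add_mtr, qform_mtr_mul. unfold sqnorm, qform, bform.
  transitivity (rsum d (fun i => v i ^ 2) + rsum d (fun i => (- c * 2) * (v i * mvec d X v i))
    + rsum d (fun i => c ^ 2 * mvec d X v i ^ 2)).
  - rewrite <- !rsum_add. apply rsum_ext; intros i Hi.
    rewrite mvec_madd, mvec_mscale, mvec_mid by exact Hi. ring.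
  - rewrite !rsum_scal. ring.
Qed.

End Forms.

Lemma sqnorm_mid0 d : (1 <= d)%nat -> sqnorm d (mid 0%nat) = 1.
Proof.
  intros Hd. unfold sqnorm.
  rewrite (rsum_ext d _ (fun j => mid 0%nat j * mid 0%nat j)) by (intros; ring).
  apply rsum_delta. lia.
Qed.

(* The minimiser comes from compactness of the unit sphere of MathComp-Analysis's row
   vectors ['rV[R]_n.+1]; [coords] reads such a row vector as a [vec]. *)
Module SphereMin.
Import all_boot all_algebra all_classical all_reals all_analysis.
Import Rstruct Rstruct_topology.
Import numFieldNormedType.Exports.
Local Open Scope classical_set_scope.

Section Coordinates.
Variable n : nat.

Definition coords (v : 'rV[R]_n.+1) : vec :=
  fun k => if (k < n.+1)%N then v ord0 (inord k) else 0%R.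

Lemma coords_row (u : vec) k :
  (k < n.+1)%N -> coords (\row_(j < n.+1) u (nat_of_ord j)) k = u k.
Proof. by move=> Hk; rewrite /coords Hk mxE inordK. Qed.

Lemma coords_continuous k : continuous (fun v => coords v k).
Proof.
rewrite /coords; case: (k < n.+1)%N; last exact: cst_continuous.
exact: (@coord_continuous R 1 n.+1 ord0 (inord k)).
Qed.

Lemma rsum_continuous m (F : nat -> 'rV[R]_n.+1 -> R) :
  (forall k, continuous (F k)) -> continuous (fun v => rsum m (fun k => F k v)).
Proof.
move=> HF; elim: m => [|m IH] /=; first exact: cst_continuous.
move=> x; exact: (@continuousD R R^o _ (fun v => rsum m (fun k => F k v)) (F m) x (IH x) (HF m x)).
Qed.

Lemma mult_continuous (F G : 'rV[R]_n.+1 -> R) :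
  continuous F -> continuous G -> continuous (fun v => Rmult (F v) (G v)).
Proof. by move=> HF HG x; exact: (@continuousM R _ F G x (HF x) (HG x)). Qed.

Lemma qform_coords_continuous (S : mat) : continuous (fun v => qform n.+1 S (coords v)).
Proof.
apply: rsum_continuous => i; apply: mult_continuous; first exact: coords_continuous.
apply: rsum_continuous => j; apply: mult_continuous; first exact: cst_continuous.
exact: coords_continuous.
Qed.

Lemma sqnorm_coords_continuous : continuous (fun v => sqnorm n.+1 (coords v)).
Proof.
apply: rsum_continuous => i /=; apply: mult_continuous; first exact: coords_continuous.
apply: mult_continuous; [exact: coords_continuous | exact: cst_continuous].
Qed.

Definition sphere : set 'rV[R]_n.+1 := (fun v => sqnorm n.+1 (coords v)) @^-1` [set x | x = 1].

Lemma sphere_compact : compact sphere.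
Proof.
have Ccube := @rV_compact R n.+1 (fun=> `[(-1)%R, 1%R]%classic) (fun=> @segment_compact _ _ _).
apply: subclosed_compact Ccube _.
  by apply: preimage_closed; [move=> v _; exact: sqnorm_coords_continuous | exact: closed_eq].
move=> v Sv i /=.
have : coords v i ^ 2 <= 1.
  rewrite -Sv; apply: (rsum_ge_term n.+1 (fun i => coords v i ^ 2)).
    by move=> k _; apply: pow2_ge_0.
  by apply/ssrnat.ltP; exact: ltn_ord.
have -> : coords v i = v ord0 i by rewrite /coords ltn_ord inord_val.
move=> H; rewrite in_itv /=; apply/andP; split; apply/RleP;
  [change (Rle (Ropp (IZR 1)) (v ord0 i)) | change (Rle (v ord0 i) (IZR 1))]; nra.
Qed.

Lemma sphere_row (u : vec) : sqnorm n.+1 u = 1 -> sphere (\row_(j < n.+1) u (nat_of_ord j))%R.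
Proof.
move=> Hu; rewrite /sphere /= -Hu; apply: rsum_ext => k Hk.
by rewrite coords_row //; apply/ssrnat.ltP.
Qed.

Lemma qform_min_on_sphere (S : mat) : exists w : vec,
  sqnorm n.+1 w = 1 /\ forall u, sqnorm n.+1 u = 1 -> qform n.+1 S w <= qform n.+1 S u.
Proof.
have S0 : sphere !=set0.
  by exists (\row_(j < n.+1) mid 0%N j)%R; apply: sphere_row; apply: sqnorm_mid0; apply/ssrnat.leP.
have [c cS cmin] := EVT_min_rV S0 sphere_compact
  (continuous_subspaceT (qform_coords_continuous S)).
exists (coords c); split; first by move: cS; rewrite inE.
move=> u Hu; have /RleP := cmin _ (mem_set (sphere_row _ Hu)).
congr (_ <= _); apply: rsum_ext => k Hk; rewrite coords_row; last by apply/ssrnat.ltP.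
congr (_ * _); apply: rsum_ext => j Hj; rewrite coords_row //; by apply/ssrnat.ltP.
Qed.

End Coordinates.
End SphereMin.

Lemma qform_min_on_sphere d S : (1 <= d)%nat -> exists w : vec,
  sqnorm d w = 1 /\ forall u, sqnorm d u = 1 -> qform d S w <= qform d S u.
Proof. intros Hd. destruct d; [lia | apply SphereMin.qform_min_on_sphere]. Qed.

Lemma epsilon_unique {A} (i : inhabited A) (P : A -> Prop) x :
  P x -> (forall y, P y -> y = x) -> epsilon i P = x.
Proof. intros Hx Hu. apply Hu, epsilon_spec. now exists x. Qed.

Lemma quadratic_nonneg_linear_coeff a b : (forall t, 0 <= a * t + b * t ^ 2) -> a = 0.
Proof.
  intros H. destruct (Req_dec a 0) as [|Ha]; [assumption | exfalso].
  set (c := Rabs b + 1).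
  assert (Hc : b < c) by (unfold c; pose proof (Rle_abs b); lra).
  assert (Hc0 : 0 < c) by (unfold c; pose proof (Rabs_pos b); lra).
  pose proof (H (- a / c)) as Ht.
  replace (a * (- a / c) + b * (- a / c) ^ 2) with (a * a / (c * c) * (b - c)) in Ht
    by (field; lra).
  assert (0 < a * a / (c * c)) by (apply Rdiv_lt_0_compat; nra).
  nra.
Qed.

Section Eigenvalues.
Variables (d : nat) (S : mat).

Lemma lambda_min_least l : is_eigenvalue d S l ->
  (forall m, is_eigenvalue d S m -> l <= m) -> lambda_min d S = l.
Proof.
  intros Hl Hle. apply epsilon_unique; [now split|].
  intros m [Hm Hmle]. specialize (Hle m Hm). specialize (Hmle l Hl). lra.
Qed.

Lemma lambda_max_greatest l : is_eigenvalue d S l ->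
  (forall m, is_eigenvalue d S m -> m <= l) -> lambda_max d S = l.
Proof.
  intros Hl Hle. apply epsilon_unique; [now split|].
  intros m [Hm Hmle]. specialize (Hle m Hm). specialize (Hmle l Hl). lra.
Qed.

Lemma is_eigenvalue_opp l : is_eigenvalue d (mscale (-1) S) l -> is_eigenvalue d S (- l).
Proof.
  intros [u [Hu Hl]]. exists u. split; [exact Hu|]. intros i Hi.
  specialize (Hl i Hi). rewrite mvec_mscale in Hl. lra.
Qed.

Lemma eigenvalue_ge_rayleigh m l : (forall v, m * sqnorm d v <= qform d S v) ->
  is_eigenvalue d S l -> m <= l.
Proof.
  intros Hray [u [Hu Hl]].
  assert (Hq : qform d S u = l * sqnorm d u).
  { unfold qform, bform, sqnorm. rewrite <- rsum_scal.
    apply rsum_ext. intros. rewrite Hl by auto. ring. }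
  pose proof (Hray u). pose proof (sqnorm_nonzero_pos d u Hu). nra.
Qed.

Hypothesis Hd : (1 <= d)%nat.

Lemma rayleigh_minimizer_exists : exists w, sqnorm d w = 1 /\
  forall v, qform d S w * sqnorm d v <= qform d S v.
Proof.
  destruct (qform_min_on_sphere d S Hd) as [w [Hw Hmin]]. exists w. split; [exact Hw|].
  intros v. destruct (Req_dec (sqnorm d v) 0) as [E|E].
  - rewrite E, Rmult_0_r. unfold qform, bform. rewrite rsum_eq0; [lra|].
    intros k Hk. rewrite (sqnorm_eq0 d v E k Hk). ring.
  - pose proof (sqnorm_nonneg d v) as Hv. set (c := / sqrt (sqnorm d v)).
    assert (Hc : c ^ 2 * sqnorm d v = 1).
    { pose proof (sqrt_lt_R0 (sqnorm d v) ltac:(lra)).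
      unfold c. rewrite pow_inv, <- Rsqr_pow2, Rsqr_sqrt by lra. field; lra. }
    pose proof (Hmin (fun k => c * v k)) as H.
    rewrite sqnorm_scale, qform_scale in H. specialize (H Hc).
    apply Rmult_le_compat_r with (r := sqnorm d v) in H; [|lra].
    replace (c ^ 2 * qform d S v * sqnorm d v) with (qform d S v * (c ^ 2 * sqnorm d v)) in H
      by ring.
    rewrite Hc in H. lra.
Qed.

Hypothesis Hs : symmetric d S.

(* A minimiser of the Rayleigh quotient is an eigenvector: moving it along the residual
   [S w - m w] changes the quotient to first order by twice the squared residual. *)
Lemma rayleigh_minimizer_eigenvector w : sqnorm d w = 1 ->
  (forall v, qform d S w * sqnorm d v <= qform d S v) ->
  forall i, (i < d)%nat -> mvec d S w i = qform d S w * w i.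
Proof.
  intros Hw Hray. set (m := qform d S w).
  set (r := fun k => mvec d S w k - m * w k).
  assert (Hrw : bform d S r w = m * rsum d (fun k => w k * r k) + sqnorm d r).
  { unfold bform, sqnorm. rewrite <- rsum_scal, <- rsum_add.
    apply rsum_ext; intros. unfold r. ring. }
  assert (Hr : sqnorm d r = 0).
  { enough (2 * sqnorm d r = 0) by lra.
    apply (quadratic_nonneg_linear_coeff _ (qform d S r - m * sqnorm d r)). intros t.
    pose proof (Hray (fun k => w k + t * r k)) as Ht.
    rewrite sqnorm_add_scaled, qform_add_scaled, Hrw, Hw in Ht by exact Hs.
    fold m in Ht. lra. }
  intros i Hi. pose proof (sqnorm_eq0 d r Hr i Hi). unfold r in *. lra.
Qed.

Lemma rayleigh_minimizer_is_eigenvalue w : sqnorm d w = 1 ->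
  (forall v, qform d S w * sqnorm d v <= qform d S v) -> is_eigenvalue d S (qform d S w).
Proof.
  intros Hw Hray. exists w. split; [apply sqnorm_pos_nonzero; lra|].
  now apply rayleigh_minimizer_eigenvector.
Qed.

Lemma rayleigh_minimizer_lambda_min w : sqnorm d w = 1 ->
  (forall v, qform d S w * sqnorm d v <= qform d S v) -> lambda_min d S = qform d S w.
Proof.
  intros Hw Hray. apply lambda_min_least.
  - now apply rayleigh_minimizer_is_eigenvalue.
  - intros l. now apply eigenvalue_ge_rayleigh.
Qed.

Lemma lambda_min_is_eigenvalue : is_eigenvalue d S (lambda_min d S).
Proof.
  destruct rayleigh_minimizer_exists as [w [Hw Hray]].
  rewrite (rayleigh_minimizer_lambda_min w Hw Hray).
  now apply rayleigh_minimizer_is_eigenvalue.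
Qed.

Lemma lambda_min_rayleigh v : lambda_min d S * sqnorm d v <= qform d S v.
Proof.
  destruct rayleigh_minimizer_exists as [w [Hw Hray]].
  rewrite (rayleigh_minimizer_lambda_min w Hw Hray). apply Hray.
Qed.

Lemma lambda_min_attained : exists w, sqnorm d w = 1 /\ qform d S w = lambda_min d S.
Proof.
  destruct rayleigh_minimizer_exists as [w [Hw Hray]]. exists w. split; [exact Hw|].
  symmetry. now apply rayleigh_minimizer_lambda_min.
Qed.

End Eigenvalues.

Lemma symmetric_opp d S : symmetric d S -> symmetric d (mscale (-1) S).
Proof. intros Hs i j Hi Hj. unfold mscale. now rewrite Hs. Qed.

Lemma lambda_max_opp d S : (1 <= d)%nat -> symmetric d S ->
  lambda_max d S = - lambda_min d (mscale (-1) S).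
Proof.
  intros Hd Hs. pose proof (symmetric_opp d S Hs) as Hs'.
  apply lambda_max_greatest.
  - apply is_eigenvalue_opp, lambda_min_is_eigenvalue; assumption.
  - intros l Hl. enough (lambda_min d (mscale (-1) S) <= - l) by lra.
    apply (eigenvalue_ge_rayleigh d (mscale (-1) S)).
    + apply lambda_min_rayleigh; assumption.
    + destruct Hl as [u [Hu Hl]]. exists u. split; [exact Hu|]. intros i Hi.
      rewrite mvec_mscale, Hl by exact Hi. ring.
Qed.

Lemma lambda_max_rayleigh d S v : (1 <= d)%nat -> symmetric d S ->
  qform d S v <= lambda_max d S * sqnorm d v.
Proof.
  intros Hd Hs. rewrite lambda_max_opp by assumption.
  pose proof (lambda_min_rayleigh d _ Hd (symmetric_opp d S Hs) v).
  rewrite qform_opp in H. lra.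
Qed.

Lemma spec_norm_le_sqrt d A B : (1 <= d)%nat ->
  (forall v, sqnorm d v = 1 -> sqnorm d (mvec d A v) <= B) -> 0 <= spec_norm d A <= sqrt B.
Proof.
  intros Hd HB.
  set (E := fun r => exists v, vnorm d v = 1 /\ r = vnorm d (mvec d A v)).
  assert (Hunit : forall v, vnorm d v = 1 -> sqnorm d v = 1).
  { intros v H. rewrite <- (sqrt_sqrt (sqnorm d v)) by apply sqnorm_nonneg.
    unfold vnorm in H. fold (sqnorm d v) in H. rewrite H. ring. }
  assert (Hub : is_upper_bound E (sqrt B)).
  { intros r [v [Hv ->]]. apply sqrt_le_1_alt, HB, Hunit, Hv. }
  assert (He : E (vnorm d (mvec d A (mid 0%nat)))).
  { exists (mid 0%nat). split; [|reflexivity].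
    unfold vnorm. fold (sqnorm d (mid 0%nat)). rewrite sqnorm_mid0 by exact Hd. apply sqrt_1. }
  assert (Hlub : is_lub E (spec_norm d A)).
  { unfold spec_norm. fold E. apply epsilon_spec. destruct (completeness E) as [m Hm].
    - now exists (sqrt B).
    - now exists (vnorm d (mvec d A (mid 0%nat))).
    - now exists m. }
  destruct Hlub as [Hlub1 Hlub2]. split.
  - apply Rle_trans with (vnorm d (mvec d A (mid 0%nat))); [apply sqrt_pos | now apply Hlub1].
  - now apply Hlub2.
Qed.

Lemma symmetric_add_mtr d X : symmetric d (madd X (mtr X)).
Proof. intros i j _ _. unfold madd, mtr. ring. Qed.

Lemma symmetric_mtr_mul d X : symmetric d (mmul d (mtr X) X).
Proof. intros i j _ _. unfold mmul, mtr. apply rsum_ext; intros; ring. Qed.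

Lemma lambda_min_pos_def d S : (1 <= d)%nat -> symmetric d S -> pos_def d S ->
  0 < lambda_min d S.
Proof.
  intros Hd Hs Hpd. destruct (lambda_min_attained d S Hd Hs) as [w [Hw <-]].
  apply Hpd, sqnorm_pos_nonzero. lra.
Qed.

Lemma lambda_max_mtr_mul_nonneg d X : (1 <= d)%nat -> 0 <= lambda_max d (mmul d (mtr X) X).
Proof.
  intros Hd.
  pose proof (lambda_max_rayleigh d _ (mid 0%nat) Hd (symmetric_mtr_mul d X)) as H.
  rewrite qform_mtr_mul, sqnorm_mid0 in H by exact Hd.
  pose proof (sqnorm_nonneg d (mvec d X (mid 0%nat))). lra.
Qed.

Lemma spec_norm_id_sub_scale_le d X c : (1 <= d)%nat -> 0 <= c ->
  0 <= spec_norm d (madd mid (mscale (- c) X)) <=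
  sqrt (exp (- c * lambda_min d (madd X (mtr X)) + c ^ 2 * lambda_max d (mmul d (mtr X) X))).
Proof.
  intros Hd Hc. apply spec_norm_le_sqrt; [exact Hd|]. intros v Hv.
  rewrite sqnorm_id_sub_scale, Hv.
  pose proof (lambda_min_rayleigh d _ Hd (symmetric_add_mtr d X) v) as Hmin.
  pose proof (lambda_max_rayleigh d _ v Hd (symmetric_mtr_mul d X)) as Hmax.
  rewrite Hv in Hmin, Hmax. pose proof (pow2_ge_0 c).
  eapply Rle_trans; [|apply exp_ineq1_le]. nra.
Qed.

Lemma exp_le_compat x y : x <= y -> exp x <= exp y.
Proof. intros [H|H]; [left; now apply exp_increasing | right; now subst]. Qed.

Lemma ln_le_compat x y : 0 < x -> x <= y -> ln x <= ln y.
Proof. intros Hx [H|H]; [left; now apply ln_increasing | right; now subst]. Qed.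

Lemma gam_pos g k : 0 < gam g k.
Proof. apply exp_pos. Qed.

Lemma gam_le_1 g k : 0 < g -> gam g k <= 1.
Proof.
  intros Hg. unfold gam, Rpower. rewrite <- exp_0 at 2. apply exp_le_compat.
  pose proof (pos_INR k). assert (0 <= ln (INR k + 1)) by (rewrite <- ln_1; apply ln_le_compat; lra).
  nra.
Qed.

Lemma natceil_ge x : x <= INR (natceil x).
Proof.
  unfold natceil. destruct (base_Int_part (- x)) as [H _].
  set (z := (- Int_part (- x))%Z).
  assert (x <= IZR z) by (unfold z; rewrite opp_IZR; lra).
  destruct (Z.le_gt_cases 0 z).
  - now rewrite INR_IZR_INZ, Z2Nat.id.
  - pose proof (pos_INR (Z.to_nat z)). assert (IZR z < 0) by (apply IZR_lt; lia). lra.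
Qed.

(* From index [natceil ((l / L)^(1/g))] on, (k+1)^g >= l / L. *)
Lemma gam_mul_le g L l k : 0 < g -> 0 < L -> 0 <= l ->
  (natceil (Rpower (l / L) (1 / g)) <= k)%nat -> gam g k * l <= L.
Proof.
  intros Hg HL Hl Hk. destruct (Req_dec l 0) as [->|Hl0]; [lra|].
  apply le_INR in Hk. pose proof (natceil_ge (Rpower (l / L) (1 / g))).
  set (r := Rpower (l / L) (1 / g)) in *.
  assert (Hr : 0 < r) by apply exp_pos.
  assert (Hrk : r <= INR k + 1) by lra.
  assert (Hln : ln (l / L) <= g * ln (INR k + 1)).
  { apply ln_le_compat in Hrk; [|exact Hr]. unfold r, Rpower in Hrk. rewrite ln_exp in Hrk.
    apply Rmult_le_compat_l with (r := g) in Hrk; [|lra].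
    replace (g * (1 / g * ln (l / L))) with (ln (l / L)) in Hrk by (field; lra). exact Hrk. }
  unfold gam, Rpower.
  assert (Hexp : exp (- g * ln (INR k + 1)) <= exp (- ln (l / L))) by (apply exp_le_compat; lra).
  rewrite exp_Ropp, exp_ln in Hexp by (apply Rdiv_lt_0_compat; lra).
  replace L with (/ (l / L) * l) by (field; lra).
  apply Rmult_le_compat_r; lra.
Qed.

Lemma sqrt_exp a : sqrt (exp a) = exp (a / 2).
Proof.
  rewrite <- (sqrt_pow2 (exp (a / 2))) by (left; apply exp_pos).
  f_equal. simpl. rewrite Rmult_1_r, <- exp_plus. f_equal. field.
Qed.

Lemma sqrt_exp_step_le_early lmin lmax q y : 0 <= lmax -> 0 < y <= 1 ->
  sqrt (exp (- y * lmin + y ^ 2 * lmax)) <=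
  sqrt (exp (y * (- lmin + lmax + 2 * q))) * exp (- q * y).
Proof.
  intros Hl Hy. rewrite !sqrt_exp, <- exp_plus. apply exp_le_compat.
  assert (0 <= (1 - y) * (y * lmax)) by (apply Rmult_le_pos; nra).
  assert (y ^ 2 * lmax <= y * lmax) by (simpl; nra). lra.
Qed.

Lemma sqrt_exp_step_le_late lmin lmax q y : 0 < y -> y * lmax <= lmin - 2 * q ->
  sqrt (exp (- y * lmin + y ^ 2 * lmax)) <= exp (- q * y).
Proof.
  intros Hy Hl. rewrite sqrt_exp. apply exp_le_compat.
  assert (y * (y * lmax) <= y * (lmin - 2 * q)) by (apply Rmult_le_compat_l; lra). simpl. nra.
Qed.

Theorem mainTheorem7 (d : nat) (X : mat) (g : R) :
  (1 <= d)%nat ->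
  pos_def d (madd X (mtr X)) ->
  0 < g < 1 ->
  let lmin := lambda_min d (madd X (mtr X)) in
  let lmax := lambda_max d (mmul d (mtr X) X) in
  let q := lmin / 4 in
  let mu := - lmin + lmax in
  let K := natceil (Rpower (lmax / (lmin - 2 * q)) (1 / g)) in
  let C := Rmax 1 (sqrt (rmax_upto K (fun l2 => rmax_upto l2 (fun l1 =>
              rprod_range l1 l2 (fun l => exp (gam g l * (mu + 2 * q))))))) in
  forall i n : nat, (i <= n)%nat ->
    rprod_range i n (fun k => spec_norm d (madd mid (mscale (- gam g k) X)))
      <= C * exp (- q * rsum_range i n (gam g)).
Proof.
  intros Hd Hpd Hg lmin lmax q mu K C i n _.
  assert (Hlmin : 0 < lmin) by (apply lambda_min_pos_def; auto using symmetric_add_mtr).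
  assert (Hlmax : 0 <= lmax) by now apply lambda_max_mtr_mul_nonneg.
  set (E := fun l => exp (gam g l * (mu + 2 * q))).
  assert (Hfactor : forall k, 0 <= spec_norm d (madd mid (mscale (- gam g k) X)) <=
            (if Nat.leb k K then sqrt (E k) else 1) * exp (- q * gam g k)).
  { intros k. pose proof (gam_pos g k). pose proof (gam_le_1 g k ltac:(lra)).
    destruct (spec_norm_id_sub_scale_le d X (gam g k) Hd ltac:(lra)) as [Hnonneg Hle].
    fold lmin lmax in Hle. split; [exact Hnonneg|]. eapply Rle_trans; [exact Hle|].
    destruct (Nat.leb_spec k K).
    - apply sqrt_exp_step_le_early; lra.
    - rewrite Rmult_1_l. apply sqrt_exp_step_le_late; [lra|].
      apply gam_mul_le; unfold q in *; (lra || lia). }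
  eapply Rle_trans; [apply rprod_range_le, Hfactor|].
  rewrite rprod_range_mul, rprod_range_exp, rsum_range_scal.
  apply Rmult_le_compat_r; [left; apply exp_pos|].
  apply rprod_range_truncated_sqrt_le. intros; left; apply exp_pos.
Qed.
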